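(* Let $A>0$, let $\mathcal{S} = \{x\in\mathbb{R}^N : \|x\|_2 > A\}$, and let $\widetilde f:\mathbb{R}^{N\times N}\to\mathbb{R}$ be a random differentiable function with $\mathbb{E}\|\nabla\widetilde f(X)\|_F^2 \le M_2$ for all $X\in\mathcal{O}(N)$. Then for any $v^{(1)},\dots,v^{(L)}\in\mathcal{S}$, $$\mathbb{E}\Big[\sum_{l=1}^L \big\|\nabla_{v^{(l)}} \widetilde f\big(H(v^{(1)})\cdots H(v^{(L)})\big)\big\|_2^2\Big] \le \frac{24}{A^2}\, N(N+2)\, L\, M_2 .$$
   Context: $\mathcal{O}(N)$ is the set of real $N\times N$ orthogonal matrices; $\|\cdot\|_F$ is the Frobenius norm. For nonzero $v\in\mathbb{R}^N$, $H(v)=I-2vv^\top/\|v\|_2^2$. The notation $\nabla_{v^{(l)}} g(H(v^{(1)})\cdots H(v^{(L)}))$ denotes the gradient with respect to $v^{(l)}$ of the composite function $(v^{(1)},\dots,v^{(L)})\mapsto g(H(v^{(1)})\cdots H(v^{(L)}))$. *)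

From HB Require Import structures.
From mathcomp Require Import all_boot all_order all_algebra.
From mathcomp Require Import all_classical all_reals all_analysis.
Set Implicit Arguments. Unset Strict Implicit. Unset Printing Implicit Defensive.
Import Order.TTheory GRing.Theory Num.Theory.
Import numFieldNormedType.Exports.
Local Open Scope ring_scope.

Definition orthogonal_mx {R : realType} {N : nat} (X : 'M[R]_N) : Prop :=
  X^T *m X = 1%:M.

Definition sqnorm2 {R : realType} {N : nat} (v : 'rV[R]_N) : R :=
  \sum_(j < N) (v 0 j) ^+ 2.

Definition sqfrob {R : realType} {N : nat} (X : 'M[R]_N) : R :=
  \sum_(i < N) \sum_(j < N) (X i j) ^+ 2.

(* Householder reflection H(v) = I - 2 v v^T / ||v||_2^2 (v a row vector, so v v^T is v^T *m v) *)
Definition householder {R : realType} {N : nat} (v : 'rV[R]_N) : 'M[R]_N :=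
  1%:M - (2 / sqnorm2 v) *: (v^T *m v).

Definition gradM {R : realType} {N : nat} (g : 'M[R]_N -> R) (X : 'M[R]_N) : 'M[R]_N :=
  \matrix_(i, j) derive g X (delta_mx i j).

Definition gradV {R : realType} {N : nat} (h : 'rV[R]_N -> R) (v : 'rV[R]_N) : 'rV[R]_N :=
  \row_j derive h v (delta_mx 0 j).

Definition prodH {R : realType} {N L : nat} (vs : 'I_L -> 'rV[R]_N) : 'M[R]_N :=
  \big[mulmx/1%:M]_(l < L) householder (vs l).

Definition upd {R : realType} {N L : nat} (vs : 'I_L -> 'rV[R]_N) (l : 'I_L) (w : 'rV[R]_N) :
  'I_L -> 'rV[R]_N := fun k => if k == l then w else vs k.

Definition gradHl {R : realType} {N L : nat} (g : 'M[R]_N -> R) (vs : 'I_L -> 'rV[R]_N)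
  (l : 'I_L) : 'rV[R]_N :=
  gradV (fun w => g (prodH (upd vs l w))) (vs l).

From HB Require Import structures.
From mathcomp Require Import all_boot all_order all_algebra.
From mathcomp Require Import all_classical all_reals all_analysis.
From mathcomp Require Import ring lra.
Import Order.TTheory GRing.Theory Num.Theory.
Import numFieldNormedType.Exports.
Import HBNNSimple.
Local Open Scope ring_scope.

(* Write X = H(v^(1)) ... H(v^(L)).  As a function of its l-th vector, the
   product is P H(w) Q with P and Q fixed and orthogonal (products of the
   other reflections).  By the chain rule, the j-th coordinate of the gradient
   with respect to v^(l) is the Frobenius pairing of P dH Q with the gradient
   G of f at X, where dH is the derivative of H along the j-th basis vector.
   Cauchy-Schwarz and the orthogonal invariance of the Frobenius norm bound
   its square by |dH|_F^2 |G|_F^2 <= 72 / |v^(l)|^2 |G|_F^2, hence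
   |grad_{v^(l)}|^2 <= 72 N / A^2 |G|_F^2 and the sum over l is at most
   24 N (N + 2) L / A^2 |G|_F^2.  Since X is orthogonal, integrating this
   pointwise bound against the hypothesis on f gives the theorem. *)

(* No
   measurability is assumed: the integral of a nonnegative function is the
   supremum of the integrals of the simple functions below it, and a simple
   function below [F] becomes, after division by [c], a simple function
   below [G]. *)
Lemma integral_le_scale {R : realType} {d : measure_display}
    {Omega : measurableType d} {P : {measure set Omega -> \bar R}}
    {F G : Omega -> R} {c : R} :
  0 <= c -> (forall w, 0 <= F w) -> (forall w, 0 <= G w) ->
  (forall w, F w <= c * G w) ->
  (\int[P]_(w in setT) (F w)%:E <= c%:E * \int[P]_(w in setT) (G w)%:E)%E.
Proof.
move=> c0 F0 G0 FG; have [c_eq0|c_gt0] := eqVneq c 0; last first.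
  have {c0 c_gt0}c_gt0 : 0 < c by rewrite lt_def c_gt0.
  rewrite !ge0_integralTE; [|by move=> w; rewrite lee_fin..].
  apply/ge_ereal_sup => /= _ [h /= hF <-].
  have ci0 : 0 <= c^-1 by rewrite invr_ge0 ltW.
  pose h' := scale_nnsfun h ci0.
  have -> : sintegral P h = (c%:E * sintegral P h')%E.
    rewrite -sintegralrM; apply: eq_sintegral => x /=.
    by rewrite mulrA mulfV ?gt_eqF // mul1r.
  rewrite lee_pmul2l ?lte_fin //; apply: ereal_sup_ubound => /=.
  exists h' => // x; rewrite /h' /= lee_fin ler_pdivrMl //.
  by have := hF x; rewrite lee_fin => /le_trans; apply.
have F_eq0 w : F w = 0.
  by apply/eqP; rewrite eq_le F0 andbT; have := FG w; rewrite c_eq0 mul0r.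
under eq_integral => w _ do rewrite F_eq0.
by rewrite integral0 c_eq0 mul0e.
Qed.

Lemma cauchy_schwarz (R : realFieldType) (I : finType) (a b : I -> R) :
  (\sum_i a i * b i) ^+ 2 <= (\sum_i a i ^+ 2) * (\sum_i b i ^+ 2).
Proof.
set S := \sum_i a i * b i; set A := \sum_i a i ^+ 2; set B := \sum_i b i ^+ 2.
have B0 : 0 <= B by apply: sumr_ge0 => i _; apply: sqr_ge0.
have [B_eq0|B_neq0] := eqVneq B 0.
  have b_eq0 i : b i = 0.
    apply/eqP; rewrite -sqrf_eq0; move/eqP: B_eq0; rewrite psumr_eq0.
      by move=> /allP/(_ i (mem_index_enum i)).
    by move=> j _; apply: sqr_ge0.
  rewrite /S big1 ?B_eq0 ?expr0n ?mulr0 // => i _.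
  by rewrite b_eq0 mulr0.
have B_gt0 : 0 < B by rewrite lt_def B_neq0.
(* expand [0 <= sum_i (B a_i - S b_i)^2 = B (A B - S^2)] *)
have : 0 <= \sum_i (B * a i - S * b i) ^+ 2.
  by apply: sumr_ge0 => i _; apply: sqr_ge0.
have -> : \sum_i (B * a i - S * b i) ^+ 2 = B * (A * B - S ^+ 2).
  transitivity (\sum_i (B ^+ 2 * a i ^+ 2 - (2 * B * S) * (a i * b i)
                        + S ^+ 2 * b i ^+ 2)).
    by apply: eq_bigr => i _; ring.
  rewrite big_split sumrB /= -!mulr_sumr -/A -/B -/S; ring.
by rewrite pmulr_rge0 // subr_ge0.
Qed.

Section Householder.
Context {R : realType} {N : nat}.
Implicit Types (u v w : 'rV[R]_N) (X Y Z : 'M[R]_N).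

Definition vdot u w : R := \sum_j u 0 j * w 0 j.
Definition frob_dot X Y : R := \sum_i \sum_j X i j * Y i j.

Lemma sqnorm2_ge0 v : 0 <= sqnorm2 v.
Proof. by apply: sumr_ge0 => j _; apply: sqr_ge0. Qed.

Lemma sqfrob_ge0 X : 0 <= sqfrob X.
Proof. by apply: sumr_ge0 => i _; apply: sumr_ge0 => j _; apply: sqr_ge0. Qed.

Lemma sqnorm2_delta (j : 'I_N) : sqnorm2 (delta_mx 0 j : 'rV[R]_N) = 1.
Proof.
rewrite /sqnorm2 (bigD1 j) //= big1 ?addr0 => [|k /negbTE k_neq_j].
  by rewrite mxE !eqxx expr1n.
by rewrite mxE k_neq_j andbF expr0n.
Qed.

Lemma vdot_cauchy_schwarz u w : vdot u w ^+ 2 <= sqnorm2 u * sqnorm2 w.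
Proof. exact: cauchy_schwarz. Qed.

Lemma frob_cauchy_schwarz X Y : frob_dot X Y ^+ 2 <= sqfrob X * sqfrob Y.
Proof. by rewrite /frob_dot /sqfrob !pair_bigA; apply: cauchy_schwarz. Qed.

Lemma mul_row_tr u w : u *m w^T = (vdot u w)%:M.
Proof.
apply/matrixP => i k; rewrite !ord1 !mxE /= mulr1n.
by apply: eq_bigr => j _; rewrite !mxE.
Qed.

Lemma sqnorm2_vdot v : sqnorm2 v = vdot v v.
Proof. by apply: eq_bigr => j _; rewrite expr2. Qed.

Lemma outer_sqr v : (v^T *m v) *m (v^T *m v) = sqnorm2 v *: (v^T *m v).
Proof.
rewrite mulmxA -[v^T *m v *m v^T]mulmxA mul_row_tr -sqnorm2_vdot.
by rewrite mul_mx_scalar -scalemxAl.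
Qed.

Lemma householder_sym v : (householder v)^T = householder v.
Proof. by rewrite /householder linearB /= trmx1 linearZ /= trmx_mul trmxK. Qed.

Lemma householder_orthogonal v :
  sqnorm2 v != 0 -> orthogonal_mx (householder v).
Proof.
move=> s_neq0; rewrite /orthogonal_mx householder_sym /householder.
rewrite mulmxBl !mulmxBr mul1mx mulmx1 -!scalemxAl -!scalemxAr mul1mx.
rewrite scalerA outer_sqr scalerA.
have -> : 2 / sqnorm2 v * (2 / sqnorm2 v) * sqnorm2 v
          = 2 / sqnorm2 v + 2 / sqnorm2 v by field.
by rewrite scalerDl opprB addrK subrK.
Qed.

Lemma orthogonal1 : orthogonal_mx (1%:M : 'M[R]_N).
Proof. by rewrite /orthogonal_mx trmx1 mulmx1. Qed.

Lemma orthogonal_mul X Y :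
  orthogonal_mx X -> orthogonal_mx Y -> orthogonal_mx (X *m Y).
Proof.
rewrite /orthogonal_mx => oX oY.
by rewrite trmx_mul mulmxA -[Y^T *m X^T *m X]mulmxA oX mulmx1 oY.
Qed.

Lemma sqfrob_trace X : sqfrob X = \tr (X^T *m X).
Proof.
rewrite /sqfrob /mxtrace exchange_big; apply: eq_bigr => i _.
by rewrite !mxE; apply: eq_bigr => k _; rewrite !mxE expr2.
Qed.

Lemma sqfrob_orthogonal X Y Z : orthogonal_mx X -> orthogonal_mx Z ->
  sqfrob (X *m Y *m Z) = sqfrob Y.
Proof.
move=> oX oZ; rewrite !sqfrob_trace !trmx_mul.
have -> : Z^T *m (Y^T *m X^T) *m (X *m Y *m Z) = Z^T *m ((Y^T *m Y) *m Z).
  by rewrite !mulmxA -[Z^T *m Y^T *m X^T *m X]mulmxA oX mulmx1.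
by rewrite mxtrace_mulC -(mulmxA (Y^T *m Y)) (mulmx1C oZ) mulmx1.
Qed.

Lemma sqfrob_scale (a : R) X : sqfrob (a *: X) = a ^+ 2 * sqfrob X.
Proof.
rewrite /sqfrob mulr_sumr; apply: eq_bigr => i _.
by rewrite mulr_sumr; apply: eq_bigr => j _; rewrite mxE exprMn.
Qed.

Lemma sqfrob_outer u w : sqfrob (u^T *m w) = sqnorm2 u * sqnorm2 w.
Proof.
rewrite /sqfrob /sqnorm2 mulr_suml; apply: eq_bigr => a _.
rewrite mulr_sumr; apply: eq_bigr => b _.
by rewrite !mxE big_ord1 !mxE exprMn.
Qed.

Lemma sqfrob_sub_add X Y Z :
  sqfrob (X - (Y + Z)) <= 3 * (sqfrob X + sqfrob Y + sqfrob Z).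
Proof.
rewrite /sqfrob -!big_split /= mulr_sumr; apply: ler_sum => i _.
rewrite -!big_split /= mulr_sumr; apply: ler_sum => j _; rewrite !mxE.
rewrite -subr_ge0.
set x := X i j; set y := Y i j; set z := Z i j.
have -> : 3 * (x ^+ 2 + y ^+ 2 + z ^+ 2) - (x - (y + z)) ^+ 2
          = (x + y) ^+ 2 + (x + z) ^+ 2 + (y - z) ^+ 2 by ring.
by rewrite !addr_ge0 ?sqr_ge0.
Qed.

(* The derivative of [t |-> householder (v + t e)] at [t = 0]. *)
Definition dhouseholder v (e : 'rV[R]_N) : 'M[R]_N :=
  (4 * vdot v e / sqnorm2 v ^+ 2) *: (v^T *m v)
  - (2 / sqnorm2 v) *: (e^T *m v + v^T *m e).

Lemma sqfrob_dhouseholder v e :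
  0 < sqnorm2 v -> sqfrob (dhouseholder v e) <= 72 * sqnorm2 e / sqnorm2 v.
Proof.
move=> s_gt0; rewrite /dhouseholder scalerDr.
apply: le_trans (sqfrob_sub_add _ _ _) _.
rewrite !sqfrob_scale !sqfrob_outer.
have := vdot_cauchy_schwarz v e.
set s := sqnorm2 v; set r := sqnorm2 e; set p := vdot v e => p_le.
have s_neq0 : s != 0 by rewrite gt_eqF.
have -> : 3 * ((4 * p / s ^+ 2) ^+ 2 * (s * s) + (2 / s) ^+ 2 * (r * s)
               + (2 / s) ^+ 2 * (s * r))
          = (48 * (p ^+ 2 / s) + 24 * r) / s by field.
rewrite ler_pM2r ?invr_gt0 //.
have : p ^+ 2 / s <= r by rewrite ler_pdivrMr // mulrC.
lra.
Qed.

End Householder.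

Section LineDerivatives.
Context {R : realType}.

Lemma is_derive_quadratic (a b c x : R) :
  is_derive x 1 (fun t : R => a * t ^+ 2 + b * t + c) (2 * a * x + b).
Proof.
have -> : (fun t : R => a * t ^+ 2 + b * t + c) =
          a \*: ((@id R) ^+ 2) + b \*: (@id R) + cst c by apply/funext.
by apply: is_derive_eq; rewrite /GRing.scale /= expr1; ring.
Qed.

Lemma is_derive_ratio (p q : R -> R) (x dp dq : R) :
  is_derive x 1 p dp -> is_derive x 1 q dq -> q x != 0 ->
  is_derive x 1 (fun t => p t / q t) ((dp * q x - p x * dq) / q x ^+ 2).
Proof.
move=> dP dQ qx_neq0.
have dQinv : is_derive x 1 (fun t => (q t)^-1) (- (q x) ^- 2 *: dq).
  apply: DeriveDef; first exact: derivableV qx_neq0 ex_derive.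
  by rewrite deriveV ?derive_val.
have -> : (fun t => p t / q t) = p * (fun t => (q t)^-1) by apply/funext.
by apply: is_derive_eq; rewrite /GRing.scale /=; field.
Qed.

Lemma is_derive_scalel (W : normedModType R) (k : R -> R) (M : W) (x dk : R) :
  is_derive x 1 k dk -> is_derive x 1 (fun t => k t *: M) (dk *: M).
Proof.
move=> dK; have k_diff : differentiable k x by exact/derivable1_diffP.
have kM_diff := differentiableZl M k_diff.
apply: DeriveDef; first exact: diff_derivable.
rewrite deriveE // diffZl //; congr (_ *: _).
by rewrite -deriveE // derive_val.
Qed.

Lemma derive_along_line (V W : normedModType R) (F : V -> W) (v e : V) :
  derive F v e = derive (fun h : R => F (h *: e + v)) 0 1.
Proof.
rewrite /derive; set lhs := fun h => h^-1 *: _; set rhs := fun h => h^-1 *: _.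
suff -> : lhs = rhs by [].
by apply/funext => h; rewrite /lhs /rhs /= addr0 scale0r add0r [_%:A]mulr1.
Qed.

Lemma derive_gradM_comp (N : nat) (g : 'M[R]_N -> R) (psi : R -> 'M[R]_N)
    (x : R) (D : 'M[R]_N) :
  is_derive x 1 psi D -> differentiable g (psi x) ->
  derive (g \o psi) x 1 = frob_dot D (gradM g (psi x)).
Proof.
move=> dPsi dg.
have psi_diff : differentiable psi x by exact/derivable1_diffP.
rewrite deriveE; last exact: differentiable_comp.
rewrite diff_comp //=.
have -> : 'd psi x 1 = D by rewrite -deriveE //; case: dPsi.
rewrite [in LHS](matrix_sum_delta D) linear_sum; apply: eq_bigr => a _.
rewrite linear_sum; apply: eq_bigr => b _.
by rewrite linearZ /= -deriveE // /gradM !mxE.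
Qed.

End LineDerivatives.
Arguments is_derive_ratio {R p q x dp dq}.
Arguments is_derive_scalel {R W k} M {x dk}.
Arguments derive_gradM_comp {R N g psi x D}.

Section HouseholderDerivative.
Context {R : realType} {N : nat}.
Implicit Types (v e : 'rV[R]_N) (Pm Qm : 'M[R]_N).

Lemma sqnorm2_line v e t :
  sqnorm2 (t *: e + v) = sqnorm2 e * t ^+ 2 + (2 * vdot v e) * t + sqnorm2 v.
Proof.
rewrite /sqnorm2 /vdot mulr_suml mulr_sumr mulr_suml -!big_split /=.
by apply: eq_bigr => k _; rewrite !mxE; ring.
Qed.

Lemma outer_line v e t :
  (t *: e + v)^T *m (t *: e + v) =
  v^T *m v + t *: (e^T *m v + v^T *m e) + t ^+ 2 *: (e^T *m e).
Proof. by apply/matrixP => a b; rewrite !mxE !big_ord1 !mxE; ring. Qed.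

(* Along the line [t |-> v + t e], a Householder matrix sandwiched between
   two fixed matrices is [Pm Qm - sum_i (p_i t / q t) M_i], with quadratic
   [p_i] and [q t = |v + t e|^2]; differentiating each ratio at [0] yields
   [dhouseholder]. *)
Lemma is_derive_householder_line Pm Qm v e : 0 < sqnorm2 v ->
  is_derive (0 : R) 1 (fun t : R => Pm *m householder (t *: e + v) *m Qm)
    (Pm *m dhouseholder v e *m Qm).
Proof.
move=> s_gt0; set s := sqnorm2 v; set p := vdot v e.
have s_neq0 : s != 0 by rewrite gt_eqF.
pose q t := sqnorm2 e * t ^+ 2 + (2 * p) * t + s.
have q0 : q 0 = s by rewrite /q; ring.
have q0_neq0 : q 0 != 0 by rewrite q0.
have dq : is_derive (0 : R) 1 q (2 * sqnorm2 e * 0 + 2 * p).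
  exact: is_derive_quadratic.
pose M0 := Pm *m (v^T *m v) *m Qm.
pose M1 := Pm *m (e^T *m v + v^T *m e) *m Qm.
pose M2 := Pm *m (e^T *m e) *m Qm.
pose k0 t := (0 * t ^+ 2 + 0 * t + 2) / q t.
pose k1 t := (0 * t ^+ 2 + 2 * t + 0) / q t.
pose k2 t := (2 * t ^+ 2 + 0 * t + 0) / q t.
have d0 := is_derive_scalel M0
  (is_derive_ratio (is_derive_quadratic 0 0 2 0) dq q0_neq0).
have d1 := is_derive_scalel M1
  (is_derive_ratio (is_derive_quadratic 0 2 0 0) dq q0_neq0).
have d2 := is_derive_scalel M2
  (is_derive_ratio (is_derive_quadratic 2 0 0 0) dq q0_neq0).
have -> : (fun t : R => Pm *m householder (t *: e + v) *m Qm) =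
    cst (Pm *m Qm) - (fun t => k0 t *: M0) - (fun t => k1 t *: M1)
    - (fun t => k2 t *: M2).
  apply/funext => t /=.
  transitivity (Pm *m Qm - k0 t *: M0 - k1 t *: M1 - k2 t *: M2); last by [].
  rewrite /householder sqnorm2_line outer_line -/p -/s.
  rewrite mulmxBr mulmx1 mulmxBl -scalemxAr -scalemxAl !mulmxDr !mulmxDl.
  rewrite -!scalemxAr -!scalemxAl -/M0 -/M1 -/M2 !scalerDr !scalerA.
  rewrite opprD opprD !addrA -/(q t).
  have -> : k0 t = 2 / q t by rewrite /k0; ring.
  have -> : k1 t = 2 / q t * t by rewrite /k1; ring.
  by have -> : k2 t = 2 / q t * t ^+ 2 by rewrite /k2; ring.
apply: is_derive_eq; rewrite q0.
set a0 := (X in 0 - X *: M0 - _ - _).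
set a1 := (X in _ - X *: M1 - _).
set a2 := (X in _ - X *: M2).
have -> : a0 = - (4 * p / s ^+ 2) by rewrite /a0; field.
have -> : a1 = 2 / s by rewrite /a1; field.
have -> : a2 = 0 by rewrite /a2; field.
rewrite /dhouseholder mulmxBr mulmxBl -!scalemxAr -!scalemxAl -/s -/p -/M0 -/M1.
by rewrite scale0r subr0 scaleNr sub0r opprK.
Qed.

Lemma derive_householder_sandwich (g : 'M[R]_N -> R) Pm Qm v e :
  0 < sqnorm2 v -> differentiable g (Pm *m householder v *m Qm) ->
  derive (fun w => g (Pm *m householder w *m Qm)) v e =
  frob_dot (Pm *m dhouseholder v e *m Qm) (gradM g (Pm *m householder v *m Qm)).
Proof.
move=> s_gt0 dg; rewrite derive_along_line.
have dPsi := is_derive_householder_line Pm Qm v e s_gt0.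
have := @derive_gradM_comp _ _ g _ _ _ dPsi.
by rewrite scale0r add0r => /(_ dg) <-.
Qed.

End HouseholderDerivative.

Section HouseholderProducts.
Context {R : realType} {N : nat}.

(* Matrix multiplication as a monoid law, so that products of matrices can be
   split and regrouped with the generic big-operator lemmas. *)
HB.instance Definition _ := Monoid.isLaw.Build 'M[R]_N 1%:M (@mulmx R N N N)
  (@mulmxA R N N N N) (@mul1mx R N N) (@mulmx1 R N N).

Lemma orthogonal_big (I : Type) (r : seq I) (P : pred I) (F : I -> 'M[R]_N) :
  (forall i, P i -> orthogonal_mx (F i)) ->
  orthogonal_mx (\big[mulmx/1%:M]_(i <- r | P i) F i).
Proof.
move=> oF; apply: (big_ind (fun X : 'M[R]_N => orthogonal_mx X)) => //.
- exact: orthogonal1.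
- exact: orthogonal_mul.
Qed.

(* In particular, products of Householder matrices are orthogonal; this is
   where the hypothesis on [M2] gets applied. *)
Lemma orthogonal_prodH {L : nat} (vs : 'I_L -> 'rV[R]_N) :
  (forall k, sqnorm2 (vs k) != 0) -> orthogonal_mx (prodH vs).
Proof.
by move=> vs_neq0; apply: orthogonal_big => k _; apply: householder_orthogonal.
Qed.

Lemma prodH_upd_sandwich {L : nat} {vs : 'I_L -> 'rV[R]_N} (l : 'I_L) :
  (forall k, sqnorm2 (vs k) != 0) ->
  exists Pm Qm, [/\ orthogonal_mx Pm, orthogonal_mx Qm &
    forall w, prodH (upd vs l w) = Pm *m householder w *m Qm].
Proof.
case: L vs l => [|L] vs l vs_neq0; first by case: l.
pose G k := householder (vs (inord k)).
exists (\big[mulmx/1%:M]_(0 <= k < l) G k).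
exists (\big[mulmx/1%:M]_(l.+1 <= k < L.+1) G k).
split=> [||w]; try by apply: orthogonal_big => k _; apply: householder_orthogonal.
rewrite /prodH.
have -> : \big[mulmx/1%:M]_(k < L.+1) householder (upd vs l w k) =
          \big[mulmx/1%:M]_(0 <= k < L.+1) householder (upd vs l w (inord k)).
  by rewrite big_mkord; apply: eq_bigr => k _; rewrite inord_val.
rewrite (@big_cat_nat _ _ _ l) //; last exact: ltnW.
rewrite (big_ltn (m := l)) //= mulmxA /upd inord_val eqxx.
have inord_neq (k : nat) : (k < L.+1)%N -> k != l -> (inord k == l) = false.
  move=> k_lt k_neq; apply/negbTE/eqP => /(congr1 val).
  by rewrite /= inordK //; apply/eqP.
congr (_ *m _ *m _); apply: eq_big_nat => k /andP[lb ub].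
- by rewrite inord_neq ?(ltn_trans ub) // ltn_eqF.
- by rewrite inord_neq // gtn_eqF.
Qed.

End HouseholderProducts.

Section GradientBounds.
Context {R : realType} {N L : nat}.
Implicit Types (g : 'M[R]_N -> R) (vs : 'I_L -> 'rV[R]_N).

Lemma sqnorm2_gradHl_le g vs (l : 'I_L) :
  (forall k, 0 < sqnorm2 (vs k)) -> differentiable g (prodH vs) ->
  sqnorm2 (gradHl g vs l) <=
    72 * N%:R / sqnorm2 (vs l) * sqfrob (gradM g (prodH vs)).
Proof.
move=> vs_gt0 dg; have vs_neq0 k : sqnorm2 (vs k) != 0 by rewrite gt_eqF.
have [Pm [Qm [oP oQ prodH_upd]]] := prodH_upd_sandwich l vs_neq0.
have prodH_eq : prodH vs = Pm *m householder (vs l) *m Qm.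
  rewrite -prodH_upd; congr prodH; apply/funext => k; rewrite /upd.
  by case: eqP => // ->.
rewrite prodH_eq in dg *; set G := gradM g _.
have entry_le (j : 'I_N) :
    (gradHl g vs l 0 j) ^+ 2 <= 72 / sqnorm2 (vs l) * sqfrob G.
  rewrite /gradHl /gradV mxE.
  under eq_fun do rewrite prodH_upd.
  rewrite derive_householder_sandwich //.
  apply: le_trans (frob_cauchy_schwarz _ _) _; rewrite sqfrob_orthogonal //.
  apply: ler_wpM2r; first exact: sqfrob_ge0.
  apply: le_trans (sqfrob_dhouseholder _ (delta_mx 0 j) (vs_gt0 l)) _.
  by rewrite sqnorm2_delta mulr1.
apply: le_trans (ler_sum _ (fun j _ => entry_le j)) _.
rewrite sumr_const card_ord le_eqVlt; apply/orP; left; apply/eqP.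
by rewrite -[LHS]mulr_natl; ring.
Qed.

Lemma sum_sqnorm2_gradHl_le g vs (A : R) :
  0 < A -> differentiable g (prodH vs) ->
  (forall l, A < Num.sqrt (sqnorm2 (vs l))) ->
  \sum_(l < L) sqnorm2 (gradHl g vs l) <=
    (24 / A ^+ 2 * (N * (N + 2))%:R * L%:R) * sqfrob (gradM g (prodH vs)).
Proof.
move=> A_gt0 dg vs_large; set G := sqfrob _.
have G_ge0 : 0 <= G by apply: sqfrob_ge0.
have A2_lt l : A ^+ 2 < sqnorm2 (vs l).
  rewrite -(sqr_sqrtr (sqnorm2_ge0 (vs l))).
  by have := vs_large l; set r := Num.sqrt _ => A_lt_r; nra.
have vs_gt0 l : 0 < sqnorm2 (vs l) by apply: lt_trans (A2_lt l); apply: exprn_gt0.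
have term_le l : sqnorm2 (gradHl g vs l) <= 72 * N%:R / A ^+ 2 * G.
  apply: le_trans (sqnorm2_gradHl_le _ _ l vs_gt0 dg) _.
  apply: ler_wpM2r => //; apply: ler_wpM2l; first by rewrite mulr_ge0.
  by rewrite lef_pV2 ?posrE ?exprn_gt0 // ltW.
apply: le_trans (ler_sum _ (fun l _ => term_le l)) _.
rewrite sumr_const card_ord -[_ *+ L]mulr_natl mulrA; apply: ler_wpM2r => //.
(* [72 N <= 24 N (N + 2)] because [N = 0] or [N + 2 >= 3] *)
have : (3 * N <= N * (N + 2))%N.
  by rewrite mulnC leq_mul2l; case: N => // n; rewrite !addnS addn0.
rewrite -(ler_nat R) !natrM natrD => N_le.
have : 0 <= L%:R * (A ^+ 2)^-1 :> R.
  by rewrite mulr_ge0 // invr_ge0 exprn_ge0 // ltW.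
nra.
Qed.

End GradientBounds.

Theorem mainTheorem8 (R : realType) (d : measure_display) (Omega : measurableType d)
  (P : probability Omega R) (N L : nat) (A M2 : R)
  (f : Omega -> 'M[R]_N -> R) :
  0 < A ->
  (forall X : 'M[R]_N, measurable_fun setT (fun w => f w X)) ->
  (forall w (X : 'M[R]_N), differentiable (f w) X) ->
  (forall X : 'M[R]_N, orthogonal_mx X ->
     (\int[P]_(w in setT) (sqfrob (gradM (f w) X))%:E <= M2%:E)%E) ->
  forall vs : 'I_L -> 'rV[R]_N,
  (forall l, A < Num.sqrt (sqnorm2 (vs l))) ->
  (\int[P]_(w in setT) (\sum_(l < L) sqnorm2 (gradHl (f w) vs l))%:E
     <= (24 / A ^+ 2 * (N * (N + 2))%:R * L%:R * M2)%:E)%E.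
Proof.
move=> A_gt0 _ f_diff grad_bound vs vs_large.
set c := 24 / A ^+ 2 * (N * (N + 2))%:R * L%:R.
have c_ge0 : 0 <= c by rewrite !mulr_ge0 // invr_ge0 exprn_ge0 // ltW.
have vs_neq0 l : sqnorm2 (vs l) != 0.
  by apply/eqP => s0; move: (vs_large l); rewrite s0 sqrtr0 ltNge ltW.
pose G w := sqfrob (gradM (f w) (prodH vs)).
apply: le_trans (integral_le_scale (G := G) c_ge0 _ _ _) _.
- by move=> w; apply: sumr_ge0 => l _; apply: sqnorm2_ge0.
- by move=> w; apply: sqfrob_ge0.
- by move=> w; apply: sum_sqnorm2_gradHl_le.
rewrite (EFinM c M2); apply: lee_wpmul2l; first by rewrite lee_fin.
exact/grad_bound/orthogonal_prodH.
Qed.
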